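(* Let $x,y>0$ and $r,s\in\mathbb{R}$, and let $F_{r,s;x,y}(w)=E(r+w,s+w;x,y)$ for $w\in\mathbb{R}$. Then $F_{r,s;x,y}$ is logarithmically convex on $\bigl(-\infty,-\frac{s+r}{2}\bigr)$ and logarithmically concave on $\bigl(-\frac{s+r}{2},\infty\bigr)$, i.e. $\frac{d^2}{dw^2}\ln F_{r,s;x,y}(w)\ge0$ for $w<-\frac{r+s}2$ and $\le 0$ for $w>-\frac{r+s}2$.
   Context: For $x,y>0$ and $r,s\in\mathbb{R}$ the extended mean values are defined by $E(r,s;x,y)=\bigl(\frac{r}{s}\cdot\frac{y^s-x^s}{y^r-x^r}\bigr)^{1/(s-r)}$ if $rs(r-s)(x-y)\neq0$; $E(r,0;x,y)=E(0,r;x,y)=\bigl(\frac1r\cdot\frac{y^r-x^r}{\ln y-\ln x}\bigr)^{1/r}$ if $r(x-y)\neq0$; $E(r,r;x,y)=e^{-1/r}\bigl(\frac{x^{x^r}}{y^{y^r}}\bigr)^{1/(x^r-y^r)}$ if $r(x-y)\neq0$; $E(0,0;x,y)=\sqrt{xy}$ if $x\neq y$; $E(r,s;x,x)=x$. *)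

From Stdlib Require Import Reals.
Open Scope R_scope.

(* Extended mean values E(r,s;x,y) (Stolarsky means), for x,y > 0.
   Cases checked in the order: x = y; r = s = 0; r = s; s = 0; r = 0; general. *)
Definition E (r s x y : R) : R :=
  if Req_EM_T x y then x
  else if Req_EM_T r s then
    (if Req_EM_T r 0 then sqrt (x * y)
     else exp (- / r) *
          Rpower (Rpower x (Rpower x r) / Rpower y (Rpower y r))
                 (/ (Rpower x r - Rpower y r)))
  else if Req_EM_T s 0 then
    Rpower (/ r * ((Rpower y r - Rpower x r) / (ln y - ln x))) (/ r)
  else if Req_EM_T r 0 then
    Rpower (/ s * ((Rpower y s - Rpower x s) / (ln y - ln x))) (/ s)
  else
    Rpower (r / s * ((Rpower y s - Rpower x s) / (Rpower y r - Rpower x r)))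
           (/ (s - r)).

Definition F (r s x y w : R) : R := E (r + w) (s + w) x y.

Definition convex_on (P : R -> Prop) (f : R -> R) : Prop :=
  forall a b t, P a -> P b -> 0 <= t <= 1 ->
    f (t * a + (1 - t) * b) <= t * f a + (1 - t) * f b.

Definition concave_on (P : R -> Prop) (f : R -> R) : Prop :=
  forall a b t, P a -> P b -> 0 <= t <= 1 ->
    t * f a + (1 - t) * f b <= f (t * a + (1 - t) * b).

(* For x <> y put m = (ln x + ln y)/2, h = (ln y - ln x)/2 and
   psi(t) = ln(sinh t / t), psi(0) = 0.  Writing x^p = e^(pm) e^(-hp) and
   y^p = e^(pm) e^(hp) turns every branch of the definition of E into
       ln E(p,q;x,y) = m + (psi(hq) - psi(hp)) / (q - p)     (p <> q),
       ln E(p,p;x,y) = m + h psi'(hp).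
   Hence (ln F)''(w) = h^2 (psi''(h(s+w)) - psi''(h(r+w))) / (s - r) when
   r <> s, and (ln F)'(w) = h^2 psi''(h(r+w)) when r = s.  The theorem thus
   reduces to one property of psi: psi'' is even and decreases in |t|.  This
   holds because psi''' <= 0 on (0, oo), which amounts to the inequality
   cosh t <= (sinh t / t)^3, proved by differentiating 3 psi - ln cosh. *)

From Stdlib Require Import Reals Lra Psatz.
From Coquelicot Require Import Coquelicot.
Open Scope R_scope.

(* Limit of f at 0 along t <> 0; it is chosen so that lim_at0 g (g 0) is
   literally continuity_pt g 0. *)
Notation lim_at0 f l := (limit1_in f (D_x no_cond 0) l 0).

Lemma lim_at0_iff (f : R -> R) (l : R) :
  lim_at0 f l <-> forall eps, 0 < eps -> exists del, 0 < del /\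
    forall t, t <> 0 -> Rabs t < del -> Rabs (f t - l) < eps.
Proof.
  unfold limit1_in, limit_in, D_x, no_cond; simpl; unfold R_dist.
  split; intros H eps Heps; destruct (H eps Heps) as [del [Hdel Hf]];
    exists del; split; auto.
  - intros t Ht Hlt. apply Hf. rewrite Rminus_0_r. auto.
  - intros t [[_ Ht] Hlt]. rewrite Rminus_0_r in Hlt. auto.
Qed.

Lemma lim_at0_ext (f g : R -> R) (l : R) :
  (forall t, t <> 0 -> f t = g t) -> lim_at0 f l -> lim_at0 g l.
Proof.
  rewrite !lim_at0_iff. intros Hfg H eps Heps.
  destruct (H eps Heps) as [del [Hdel Hf]]. exists del; split; auto.
  intros t Ht Hlt. rewrite <- Hfg; auto.
Qed.

Lemma lim_at0_comp (f g : R -> R) (l : R) :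
  lim_at0 f l -> continuity_pt g l -> lim_at0 (fun t => g (f t)) (g l).
Proof.
  rewrite !lim_at0_iff. intros Hf Hg eps Heps.
  unfold continuity_pt, continue_in, limit1_in, limit_in in Hg; simpl in Hg;
    unfold R_dist in Hg.
  destruct (Hg eps Heps) as [a [Ha Hga]].
  destruct (Hf a Ha) as [del [Hdel Hfd]]. exists del; split; auto.
  intros t Ht Hlt. destruct (Req_dec (f t) l) as [E | E].
  - rewrite E, Rminus_diag, Rabs_R0. auto.
  - apply Hga. repeat split; auto.
Qed.

Lemma lim_at0_eq_value (f : R -> R) (l l' : R) : l = l' -> lim_at0 f l -> lim_at0 f l'.
Proof. intros <-. auto. Qed.

Lemma continuity_of_derivable (f : R -> R) (x l : R) :
  derivable_pt_lim f x l -> continuity_pt f x.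
Proof. intros H. apply derivable_continuous_pt. exists l. exact H. Qed.

Lemma cauchy_mvt (N D N' D' : R -> R) (a b : R) : a < b ->
  (forall c, a <= c <= b -> continuity_pt N c) ->
  (forall c, a <= c <= b -> continuity_pt D c) ->
  (forall c, a < c < b -> derivable_pt_lim N c (N' c)) ->
  (forall c, a < c < b -> derivable_pt_lim D c (D' c)) ->
  exists c, a < c < b /\ (D b - D a) * N' c = (N b - N a) * D' c.
Proof.
  intros Hab cN cD dN dD.
  assert (prN : forall c, a < c < b -> derivable_pt N c)
    by (intros c Hc; exists (N' c); exact (dN c Hc)).
  assert (prD : forall c, a < c < b -> derivable_pt D c)
    by (intros c Hc; exists (D' c); exact (dD c Hc)).
  destruct (MVT N D a b prN prD Hab cN cD) as [c [Hc Heq]].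
  exists c; split; auto.
  rewrite (derive_pt_eq_0 N c (N' c) (prN c Hc) (dN c Hc)),
    (derive_pt_eq_0 D c (D' c) (prD c Hc) (dD c Hc)) in Heq.
  exact Heq.
Qed.

Lemma lagrange_mvt (g g' : R -> R) (a b : R) : a < b ->
  (forall z, a <= z <= b -> continuity_pt g z) ->
  (forall z, a < z < b -> derivable_pt_lim g z (g' z)) ->
  exists c, a < c < b /\ g b - g a = g' c * (b - a).
Proof.
  intros Hab cg dg.
  assert (did : forall z, derivable_pt_lim (fun z => z) z 1)
    by (intros; apply derivable_pt_lim_id).
  destruct (cauchy_mvt g (fun z => z) g' (fun _ => 1) a b Hab cg) as [c [Hc Heq]];
    auto.
  - intros c _. exact (continuity_of_derivable _ c 1 (did c)).
  - exists c. split; auto. lra.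
Qed.

Lemma le_of_deriv_nonneg (g g' : R -> R) (a b : R) : a <= b ->
  (forall z, a <= z <= b -> continuity_pt g z) ->
  (forall z, a < z < b -> derivable_pt_lim g z (g' z)) ->
  (forall z, a < z < b -> 0 <= g' z) -> g a <= g b.
Proof.
  intros Hab cg dg pos. destruct (Req_dec a b) as [<- | Hne]; [lra |].
  destruct (lagrange_mvt g g' a b) as [c [Hc Heq]]; auto; [lra |].
  specialize (pos c Hc). nra.
Qed.

Lemma le_of_deriv_nonpos (g g' : R -> R) (a b : R) : a <= b ->
  (forall z, a <= z <= b -> continuity_pt g z) ->
  (forall z, a < z < b -> derivable_pt_lim g z (g' z)) ->
  (forall z, a < z < b -> g' z <= 0) -> g b <= g a.
Proof.
  intros Hab cg dg neg. destruct (Req_dec a b) as [<- | Hne]; [lra |].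
  destruct (lagrange_mvt g g' a b) as [c [Hc Heq]]; auto; [lra |].
  specialize (neg c Hc). nra.
Qed.

Lemma lhopital_at0 (N D N' D' : R -> R) (l : R) :
  continuity_pt N 0 -> continuity_pt D 0 -> N 0 = 0 -> D 0 = 0 ->
  (forall t, t <> 0 -> derivable_pt_lim N t (N' t)) ->
  (forall t, t <> 0 -> derivable_pt_lim D t (D' t)) ->
  (forall t, t <> 0 -> D t <> 0) -> (forall t, t <> 0 -> D' t <> 0) ->
  lim_at0 (fun t => N' t / D' t) l -> lim_at0 (fun t => N t / D t) l.
Proof.
  intros cN cD N0 D0 dN dD Dne D'ne Hlim.
  assert (cN' : forall c, continuity_pt N c).
  { intros c. destruct (Req_dec c 0) as [-> | Hc]; auto.
    exact (continuity_of_derivable N c (N' c) (dN c Hc)). }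
  assert (cD' : forall c, continuity_pt D c).
  { intros c. destruct (Req_dec c 0) as [-> | Hc]; auto.
    exact (continuity_of_derivable D c (D' c) (dD c Hc)). }
  assert (mean : forall t, t <> 0 -> exists c, c <> 0 /\ Rabs c < Rabs t /\
                   D t * N' c = N t * D' c).
  { intros t Ht. destruct (Rlt_or_le 0 t) as [Hpos | Hneg].
    - destruct (cauchy_mvt N D N' D' 0 t Hpos (fun c _ => cN' c) (fun c _ => cD' c))
        as [c [Hc Heq]]; [intros c Hc; apply dN; lra | intros c Hc; apply dD; lra |].
      exists c. rewrite N0, D0 in Heq. rewrite !Rabs_right by lra.
      repeat split; lra.
    - destruct (cauchy_mvt N D N' D' t 0 ltac:(lra) (fun c _ => cN' c) (fun c _ => cD' c))
        as [c [Hc Heq]]; [intros c Hc; apply dN; lra | intros c Hc; apply dD; lra |].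
      exists c. rewrite N0, D0 in Heq. rewrite !Rabs_left by lra.
      repeat split; lra. }
  rewrite lim_at0_iff in *. intros eps Heps.
  destruct (Hlim eps Heps) as [del [Hdel Hclose]]. exists del; split; auto.
  intros t Ht Htdel. destruct (mean t Ht) as [c [Hc [Hct Heq]]].
  replace (N t / D t) with (N' c / D' c).
  - apply Hclose; auto. lra.
  - specialize (Dne t Ht). specialize (D'ne c Hc). field_simplify_eq; auto. lra.
Qed.

(* Differentiability at a removable point: if f is continuous at 0,
   differentiable away from 0 and f' is continuous at 0, then f'(0) is the
   derivative at 0 (L'Hopital applied to the difference quotient). *)
Lemma derivable_at0_of_continuous_deriv (f f' : R -> R) :
  continuity_pt f 0 -> (forall t, t <> 0 -> derivable_pt_lim f t (f' t)) ->
  continuity_pt f' 0 -> derivable_pt_lim f 0 (f' 0).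
Proof.
  intros cf df cf'.
  assert (Hq : lim_at0 (fun t => (f t - f 0) / t) (f' 0)).
  { apply (lhopital_at0 (fun t => f t - f 0) (fun t => t) f' (fun _ => 1)).
    - apply (lim_at0_comp f (fun z => z - f 0) (f 0) cf).
      apply (continuity_of_derivable _ _ 1). apply is_derive_Reals.
      auto_derive; auto.
    - apply continuity_pt_id.
    - ring.
    - reflexivity.
    - intros t Ht. rewrite <- (Rminus_0_r (f' t)).
      apply (derivable_pt_lim_minus f (fun _ => f 0)); auto.
      apply derivable_pt_lim_const.
    - intros t _. apply derivable_pt_lim_id.
    - auto.
    - intros; lra.
    - apply (lim_at0_ext f'); auto. intros t _. field. }
  rewrite lim_at0_iff in Hq. intros eps Heps.
  destruct (Hq eps Heps) as [del [Hdel Hclose]].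
  exists (mkposreal del Hdel). intros h Hh Hhdel. rewrite Rplus_0_l. auto.
Qed.

Ltac derive_closed_form :=
  apply is_derive_Reals; auto_derive; try (repeat split; auto; fail).

Lemma sinh_pos (t : R) : 0 < t -> 0 < sinh t.
Proof. intros Ht. rewrite <- sinh_0. apply sinh_lt, Ht. Qed.

Lemma sinh_opp (t : R) : sinh (- t) = - sinh t.
Proof. unfold sinh. rewrite Ropp_involutive. field. Qed.

Lemma sinh_neq0 (t : R) : t <> 0 -> sinh t <> 0.
Proof.
  intros Ht. destruct (Rlt_or_le 0 t) as [Hpos | Hneg].
  - pose proof (sinh_pos t Hpos). lra.
  - pose proof (sinh_pos (- t)). rewrite sinh_opp in *. lra.
Qed.

Lemma sinh_div_pos (t : R) : t <> 0 -> 0 < sinh t / t.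
Proof.
  intros Ht. destruct (Rlt_or_le 0 t) as [Hpos | Hneg].
  - apply Rdiv_lt_0_compat; auto using sinh_pos.
  - pose proof (sinh_pos (- t)). rewrite sinh_opp in *.
    replace (sinh t / t) with (- sinh t / - t) by (field; auto).
    apply Rdiv_lt_0_compat; lra.
Qed.

Lemma cosh_pos (t : R) : 0 < cosh t.
Proof. unfold cosh. pose proof (exp_pos t). pose proof (exp_pos (- t)). lra. Qed.

Lemma cosh_sqr_sub_sinh_sqr (t : R) : cosh t * cosh t - sinh t * sinh t = 1.
Proof.
  unfold cosh, sinh. rewrite exp_Ropp. pose proof (exp_pos t). field. lra.
Qed.

Lemma lim_sinh_div : lim_at0 (fun t => sinh t / t) 1.
Proof.
  apply (lhopital_at0 sinh (fun t => t) cosh (fun _ => 1)).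
  - exact (continuity_of_derivable _ _ _ (derivable_pt_lim_sinh 0)).
  - apply continuity_pt_id.
  - apply sinh_0.
  - reflexivity.
  - intros t _. apply derivable_pt_lim_sinh.
  - intros t _. apply derivable_pt_lim_id.
  - auto.
  - intros; lra.
  - apply (lim_at0_ext cosh). { intros; field. }
    rewrite <- cosh_0. exact (continuity_of_derivable _ _ _ (derivable_pt_lim_cosh 0)).
Qed.

Lemma lim_tcosh_sub_sinh : lim_at0 (fun t => (t * cosh t - sinh t) / (t * t)) 0.
Proof.
  apply (lhopital_at0 _ _ (fun t => t * sinh t) (fun t => 2 * t)).
  - apply (continuity_of_derivable _ _ (0 * sinh 0)). derive_closed_form. ring.
  - apply (continuity_of_derivable _ _ (2 * 0)). derive_closed_form. ring.
  - rewrite sinh_0. ring.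
  - ring.
  - intros t _. derive_closed_form. ring.
  - intros t _. derive_closed_form. ring.
  - intros t Ht. apply Rmult_integral_contrapositive; auto.
  - intros t Ht. lra.
  - apply (lim_at0_ext (fun t => sinh t / 2)). { intros t Ht. field. auto. }
    apply (lim_at0_eq_value _ (sinh 0 / 2)). { rewrite sinh_0. field. }
    apply (continuity_of_derivable (fun t => sinh t / 2) 0 (cosh 0 / 2)).
    derive_closed_form. field.
Qed.

Lemma lim_cosh_sub_1 : lim_at0 (fun t => (cosh t - 1) / (3 * (t * t))) (/ 6).
Proof.
  apply (lhopital_at0 _ _ sinh (fun t => 6 * t)).
  - apply (continuity_of_derivable _ _ (sinh 0)). derive_closed_form. ring.
  - apply (continuity_of_derivable _ _ (6 * 0)). derive_closed_form. ring.
  - rewrite cosh_0. ring.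
  - ring.
  - intros t _. derive_closed_form. ring.
  - intros t _. derive_closed_form. ring.
  - intros t Ht. apply Rmult_integral_contrapositive; split; [lra |].
    apply Rmult_integral_contrapositive; auto.
  - intros t Ht. lra.
  - apply (lim_at0_ext (fun t => sinh t / t * / 6)). { intros t Ht. field. auto. }
    apply (lim_at0_eq_value _ (1 * / 6)); [ring |].
    apply limit_mul; [apply lim_sinh_div | apply (limit_free (fun _ => / 6) _ 0 0)].
Qed.

Lemma lim_sinh_sub_id : lim_at0 (fun t => (sinh t - t) / (t * t * t)) (/ 6).
Proof.
  apply (lhopital_at0 _ _ (fun t => cosh t - 1) (fun t => 3 * (t * t))).
  - apply (continuity_of_derivable _ _ (cosh 0 - 1)). derive_closed_form. ring.
  - apply (continuity_of_derivable _ _ (3 * (0 * 0))). derive_closed_form. ring.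
  - rewrite sinh_0. ring.
  - ring.
  - intros t _. derive_closed_form. ring.
  - intros t _. derive_closed_form. ring.
  - intros t Ht. repeat apply Rmult_integral_contrapositive; auto.
  - intros t Ht. apply Rmult_integral_contrapositive; split; [lra |].
    apply Rmult_integral_contrapositive; auto.
  - apply lim_cosh_sub_1.
Qed.

(* psi(t) = ln(sinh t / t) and its first three derivatives, extended at the
   removable point 0 by their limits (psi''' is only used away from 0). *)
Definition psi (t : R) : R := if Req_EM_T t 0 then 0 else ln (sinh t / t).
Definition psi' (t : R) : R := if Req_EM_T t 0 then 0 else cosh t / sinh t - / t.
Definition psi'' (t : R) : R :=
  if Req_EM_T t 0 then / 3 else / (t * t) - / (sinh t * sinh t).
Definition psi''' (t : R) : R :=
  2 * cosh t / (sinh t * sinh t * sinh t) - 2 / (t * t * t).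

Lemma psi_ne0 (t : R) : t <> 0 -> psi t = ln (sinh t / t).
Proof. intros Ht. unfold psi. destruct (Req_EM_T t 0); tauto. Qed.
Lemma psi'_ne0 (t : R) : t <> 0 -> psi' t = cosh t / sinh t - / t.
Proof. intros Ht. unfold psi'. destruct (Req_EM_T t 0); tauto. Qed.
Lemma psi''_ne0 (t : R) : t <> 0 -> psi'' t = / (t * t) - / (sinh t * sinh t).
Proof. intros Ht. unfold psi''. destruct (Req_EM_T t 0); tauto. Qed.
Lemma psi_0 : psi 0 = 0.
Proof. unfold psi. destruct (Req_EM_T 0 0); tauto. Qed.
Lemma psi'_0 : psi' 0 = 0.
Proof. unfold psi'. destruct (Req_EM_T 0 0); tauto. Qed.
Lemma psi''_0 : psi'' 0 = / 3.
Proof. unfold psi''. destruct (Req_EM_T 0 0); tauto. Qed.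

Lemma derivable_off0_ext (f g : R -> R) (t l : R) : t <> 0 ->
  (forall z, z <> 0 -> f z = g z) -> derivable_pt_lim g t l -> derivable_pt_lim f t l.
Proof.
  intros Ht Hfg Hg.
  apply (derivable_pt_lim_locally_ext g f t (t - Rabs t) (t + Rabs t)); auto.
  - pose proof (Rabs_pos_lt t Ht). lra.
  - intros z Hz. symmetry. apply Hfg. intros ->.
    unfold Rabs in Hz. destruct (Rcase_abs t); lra.
Qed.

Lemma psi_derive_ne0 (t : R) : t <> 0 -> derivable_pt_lim psi t (psi' t).
Proof.
  intros Ht.
  apply (derivable_off0_ext _ (fun z => ln (sinh z / z))); auto using psi_ne0.
  rewrite psi'_ne0 by auto. pose proof (sinh_neq0 t Ht).
  derive_closed_form.
  - repeat split; auto. apply sinh_div_pos, Ht.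
  - field. auto.
Qed.

Lemma psi'_derive_ne0 (t : R) : t <> 0 -> derivable_pt_lim psi' t (psi'' t).
Proof.
  intros Ht.
  apply (derivable_off0_ext _ (fun z => cosh z / sinh z - / z)); auto using psi'_ne0.
  rewrite psi''_ne0 by auto. pose proof (sinh_neq0 t Ht).
  pose proof (cosh_sqr_sub_sinh_sqr t).
  derive_closed_form. field_simplify_eq; auto.
  replace (cosh t ^ 2) with (1 + sinh t ^ 2) by (simpl; lra). ring.
Qed.

Lemma psi''_derive_ne0 (t : R) : t <> 0 -> derivable_pt_lim psi'' t (psi''' t).
Proof.
  intros Ht.
  apply (derivable_off0_ext _ (fun z => / (z * z) - / (sinh z * sinh z)));
    auto using psi''_ne0.
  unfold psi'''. pose proof (sinh_neq0 t Ht).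
  derive_closed_form. field. auto.
Qed.

Lemma psi_continuous_at0 : continuity_pt psi 0.
Proof.
  change (lim_at0 psi (psi 0)). rewrite psi_0.
  apply (lim_at0_ext (fun t => ln (sinh t / t))); [intros; rewrite psi_ne0; auto |].
  apply (lim_at0_eq_value _ (ln 1)); [apply ln_1 |].
  apply (lim_at0_comp _ ln 1 lim_sinh_div).
  apply (continuity_of_derivable _ _ (/ 1)), derivable_pt_lim_ln. lra.
Qed.

Lemma psi'_continuous_at0 : continuity_pt psi' 0.
Proof.
  change (lim_at0 psi' (psi' 0)). rewrite psi'_0.
  apply (lim_at0_ext (fun t => (t * cosh t - sinh t) / (t * t) * / (sinh t / t))).
  { intros t Ht. rewrite psi'_ne0 by auto. pose proof (sinh_neq0 t Ht). field. auto. }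
  apply (lim_at0_eq_value _ (0 * / 1)); [ring |].
  apply limit_mul; [apply lim_tcosh_sub_sinh |].
  apply limit_inv; [apply lim_sinh_div | lra].
Qed.

Lemma psi''_continuous_at0 : continuity_pt psi'' 0.
Proof.
  change (lim_at0 psi'' (psi'' 0)). rewrite psi''_0.
  apply (lim_at0_ext (fun t => (sinh t - t) / (t * t * t) * (sinh t / t + 1) *
                                (/ (sinh t / t) * / (sinh t / t)))).
  { intros t Ht. rewrite psi''_ne0 by auto. pose proof (sinh_neq0 t Ht). field. auto. }
  apply (lim_at0_eq_value _ (/ 6 * (1 + 1) * (/ 1 * / 1))); [field |].
  repeat apply limit_mul.
  - apply lim_sinh_sub_id.
  - apply limit_plus; [apply lim_sinh_div | apply (limit_free (fun _ => 1) _ 0 0)].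
  - apply limit_inv; [apply lim_sinh_div | lra].
  - apply limit_inv; [apply lim_sinh_div | lra].
Qed.

Lemma psi_derive (t : R) : derivable_pt_lim psi t (psi' t).
Proof.
  destruct (Req_dec t 0) as [-> | Ht]; [| apply psi_derive_ne0, Ht].
  apply derivable_at0_of_continuous_deriv;
    auto using psi_continuous_at0, psi_derive_ne0, psi'_continuous_at0.
Qed.

Lemma psi'_derive (t : R) : derivable_pt_lim psi' t (psi'' t).
Proof.
  destruct (Req_dec t 0) as [-> | Ht]; [| apply psi'_derive_ne0, Ht].
  apply derivable_at0_of_continuous_deriv;
    auto using psi'_continuous_at0, psi'_derive_ne0, psi''_continuous_at0.
Qed.

Lemma psi''_continuous (t : R) : continuity_pt psi'' t.
Proof.
  destruct (Req_dec t 0) as [-> | Ht]; [apply psi''_continuous_at0 |].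
  exact (continuity_of_derivable _ _ _ (psi''_derive_ne0 t Ht)).
Qed.

(* The same facts in Coquelicot's language, so that auto_derive can treat
   psi and psi' as differentiable functions. *)
Lemma Derive_psi (t : R) : Derive (fun z => psi z) t = psi' t.
Proof. apply is_derive_unique, is_derive_Reals, psi_derive. Qed.
Lemma Derive_psi' (t : R) : Derive (fun z => psi' z) t = psi'' t.
Proof. apply is_derive_unique, is_derive_Reals, psi'_derive. Qed.
Lemma ex_derive_psi (t : R) : ex_derive (fun z => psi z) t.
Proof. exists (psi' t). apply is_derive_Reals, psi_derive. Qed.
Lemma ex_derive_psi' (t : R) : ex_derive (fun z => psi' z) t.
Proof. exists (psi'' t). apply is_derive_Reals, psi'_derive. Qed.
#[local] Hint Resolve ex_derive_psi ex_derive_psi' : core.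

Lemma le_of_derivable_nonneg (g g' : R -> R) (a b : R) : a <= b ->
  (forall z, derivable_pt_lim g z (g' z)) ->
  (forall z, a < z < b -> 0 <= g' z) -> g a <= g b.
Proof.
  intros Hab dg pos. apply (le_of_deriv_nonneg g g'); auto.
  intros z _. exact (continuity_of_derivable g z (g' z) (dg z)).
Qed.

Lemma sinh_le_tcosh (t : R) : 0 <= t -> sinh t <= t * cosh t.
Proof.
  intros Ht.
  enough (0 * cosh 0 - sinh 0 <= t * cosh t - sinh t) by (rewrite sinh_0 in *; lra).
  apply (le_of_derivable_nonneg (fun z => z * cosh z - sinh z)
           (fun z => z * sinh z) 0 t Ht).
  - intros z. derive_closed_form. ring.
  - intros z Hz. pose proof (sinh_pos z). nra.
Qed.

(* 3 sinh t cosh t <= 2 t cosh^2 t + t for t >= 0: the derivative of the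
   difference is 4 sinh t (t cosh t - sinh t). *)
Lemma three_sinh_cosh_le (t : R) : 0 <= t ->
  3 * sinh t * cosh t <= 2 * t * cosh t * cosh t + t.
Proof.
  intros Ht.
  enough (2 * 0 * cosh 0 * cosh 0 + 0 - 3 * sinh 0 * cosh 0 <=
          2 * t * cosh t * cosh t + t - 3 * sinh t * cosh t)
    by (rewrite sinh_0 in *; lra).
  apply (le_of_derivable_nonneg
           (fun z => 2 * z * cosh z * cosh z + z - 3 * sinh z * cosh z)
           (fun z => 4 * sinh z * (z * cosh z - sinh z)) 0 t Ht).
  - intros z. pose proof (cosh_sqr_sub_sinh_sqr z). derive_closed_form. nra.
  - intros z Hz. pose proof (sinh_pos z). pose proof (sinh_le_tcosh z). nra.
Qed.

(* tanh t <= 3 psi'(t) for t > 0, i.e. 3 psi - ln cosh is nondecreasing. *)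
Lemma tanh_le_3psi' (t : R) : 0 < t -> sinh t / cosh t <= 3 * psi' t.
Proof.
  intros Ht. rewrite psi'_ne0 by lra.
  pose proof (sinh_pos t Ht). pose proof (cosh_pos t).
  pose proof (cosh_sqr_sub_sinh_sqr t). pose proof (three_sinh_cosh_le t).
  assert (Hpos : 0 < t * sinh t * cosh t)
    by (apply Rmult_lt_0_compat; [apply Rmult_lt_0_compat |]; lra).
  apply (Rmult_le_reg_r (t * sinh t * cosh t)); auto.
  replace (sinh t / cosh t * (t * sinh t * cosh t)) with (t * sinh t * sinh t)
    by (field; lra).
  replace (3 * (cosh t / sinh t - / t) * (t * sinh t * cosh t))
    with (3 * (t * cosh t * cosh t - sinh t * cosh t)) by (field; lra).
  nra.
Qed.

Lemma cosh_le_sinh_div_cube (t : R) : 0 < t -> cosh t <= (sinh t / t) ^ 3.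
Proof.
  intros Ht.
  assert (Hlog : 3 * psi 0 - ln (cosh 0) <= 3 * psi t - ln (cosh t)).
  { apply (le_of_derivable_nonneg (fun z => 3 * psi z - ln (cosh z))
             (fun z => 3 * psi' z - sinh z / cosh z)); [lra | |].
    - intros z. pose proof (cosh_pos z). derive_closed_form.
      rewrite Derive_psi. field. lra.
    - intros z Hz. pose proof (tanh_le_3psi' z). lra. }
  rewrite psi_0, cosh_0, ln_1, psi_ne0 in Hlog by lra.
  pose proof (sinh_div_pos t ltac:(lra)) as HS.
  destruct (Rle_or_lt (cosh t) ((sinh t / t) ^ 3)) as [Hle | Hlt]; auto.
  apply ln_increasing in Hlt; [| apply pow_lt, HS].
  rewrite ln_pow in Hlt by auto. simpl in Hlt. lra.
Qed.

Lemma psi'''_nonpos (t : R) : 0 < t -> psi''' t <= 0.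
Proof.
  intros Ht. unfold psi'''.
  pose proof (cosh_le_sinh_div_cube t Ht). pose proof (sinh_pos t Ht).
  pose proof (sinh_div_pos t ltac:(lra)) as HS.
  assert (Hden : 0 < / (t * t * t * (sinh t / t) ^ 3)).
  { apply Rinv_0_lt_compat, Rmult_lt_0_compat; [| apply pow_lt, HS].
    repeat apply Rmult_lt_0_compat; lra. }
  replace (2 * cosh t / (sinh t * sinh t * sinh t) - 2 / (t * t * t))
    with (2 * (cosh t - (sinh t / t) ^ 3) * / (t * t * t * (sinh t / t) ^ 3))
    by (field; lra).
  nra.
Qed.

Lemma psi''_antitone (p q : R) : 0 <= p <= q -> psi'' q <= psi'' p.
Proof.
  intros [Hp Hpq]. apply (le_of_deriv_nonpos psi'' psi''' p q Hpq).
  - intros z _. apply psi''_continuous.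
  - intros z Hz. apply psi''_derive_ne0. lra.
  - intros z Hz. apply psi'''_nonpos. lra.
Qed.

Lemma psi''_even (t : R) : psi'' (- t) = psi'' t.
Proof.
  destruct (Req_dec t 0) as [-> | Ht]; [rewrite Ropp_0; reflexivity |].
  pose proof (sinh_neq0 t Ht).
  rewrite !psi''_ne0, sinh_opp by lra. field. auto.
Qed.

Lemma psi''_abs_antitone (p q : R) : Rabs p <= Rabs q -> psi'' q <= psi'' p.
Proof.
  assert (Habs : forall t, psi'' t = psi'' (Rabs t)).
  { intros t. unfold Rabs. destruct (Rcase_abs t); auto. rewrite psi''_even. auto. }
  intros Hpq. rewrite (Habs p), (Habs q). apply psi''_antitone.
  split; auto using Rabs_pos.
Qed.

Definition convex_concave_about (c : R) (f : R -> R) : Prop :=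
  convex_on (fun w => w < c) f /\ concave_on (fun w => c < w) f.

Lemma convex_concave_about_ext (c : R) (f g : R -> R) :
  (forall w, f w = g w) -> convex_concave_about c f -> convex_concave_about c g.
Proof.
  intros Hfg [Hconv Hconc]. split; intros a b t Pa Pb Ht; rewrite <- !Hfg; auto.
Qed.

Definition is_interval (P : R -> Prop) : Prop :=
  forall u v z, P u -> P v -> u <= z <= v -> P z.

(* A function with nondecreasing derivative lies below its chords; the case
   a < b, via the mean value theorem on [a, c] and [c, b]. *)
Lemma below_chord_of_monotone_deriv (P : R -> Prop) (f f' : R -> R) :
  (forall z, derivable_pt_lim f z (f' z)) -> is_interval P ->
  (forall u v, P u -> P v -> u <= v -> f' u <= f' v) ->
  forall a b t, P a -> P b -> a < b -> 0 <= t <= 1 ->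
    f (t * a + (1 - t) * b) <= t * f a + (1 - t) * f b.
Proof.
  intros df HP mono a b t Pa Pb Hab Ht.
  destruct (Req_dec t 0) as [-> | Ht0].
  { replace (0 * a + (1 - 0) * b) with b by ring. lra. }
  destruct (Req_dec t 1) as [-> | Ht1].
  { replace (1 * a + (1 - 1) * b) with a by ring. lra. }
  set (c := t * a + (1 - t) * b).
  assert (Hc : a < c < b) by (unfold c; split; nra).
  destruct (MVT_cor2 f f' a c) as [x1 [E1 Hx1]]; [lra | auto |].
  destruct (MVT_cor2 f f' c b) as [x2 [E2 Hx2]]; [lra | auto |].
  assert (Hslopes : f' x1 <= f' x2)
    by (apply mono; [apply (HP a b) | apply (HP a b) | ]; auto; lra).
  replace (c - a) with ((1 - t) * (b - a)) in E1 by (unfold c; ring).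
  replace (b - c) with (t * (b - a)) in E2 by (unfold c; ring).
  assert (t * (1 - t) * (b - a) * f' x1 <= t * (1 - t) * (b - a) * f' x2)
    by (apply Rmult_le_compat_l; auto; apply Rmult_le_pos; nra).
  nra.
Qed.

Lemma convex_of_monotone_deriv (P : R -> Prop) (f f' : R -> R) :
  (forall z, derivable_pt_lim f z (f' z)) -> is_interval P ->
  (forall u v, P u -> P v -> u <= v -> f' u <= f' v) -> convex_on P f.
Proof.
  intros df HP mono a b t Pa Pb Ht.
  destruct (Rtotal_order a b) as [Hab | [<- | Hba]].
  - apply (below_chord_of_monotone_deriv P f f'); auto.
  - replace (t * a + (1 - t) * a) with a by ring. lra.
  - replace (t * a + (1 - t) * b) with ((1 - t) * b + (1 - (1 - t)) * a) by ring.
    replace (t * f a + (1 - t) * f b) with ((1 - t) * f b + (1 - (1 - t)) * f a) by ring.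
    apply (below_chord_of_monotone_deriv P f f'); auto; lra.
Qed.

Lemma concave_of_monotone_deriv (P : R -> Prop) (f f' : R -> R) :
  (forall z, derivable_pt_lim f z (f' z)) -> is_interval P ->
  (forall u v, P u -> P v -> u <= v -> f' v <= f' u) -> concave_on P f.
Proof.
  intros df HP mono.
  assert (Hconv : convex_on P (fun z => - f z)).
  { apply (convex_of_monotone_deriv P _ (fun z => - f' z)); auto.
    - intros z. apply (derivable_pt_lim_opp f z (f' z)), df.
    - intros u v Pu Pv Huv. specialize (mono u v Pu Pv Huv). lra. }
  intros a b t Pa Pb Ht. specialize (Hconv a b t Pa Pb Ht). cbv beta in Hconv. lra.
Qed.

Lemma Rabs_scale_le (h A B : R) : Rabs A <= Rabs B -> Rabs (h * A) <= Rabs (h * B).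
Proof. intros H. rewrite !Rabs_mult. apply Rmult_le_compat_l; auto using Rabs_pos. Qed.

(* psi''(hA) - psi''(hB) has the sign of A - B when A + B <= 0, and the
   opposite sign when A + B >= 0: the point of smaller modulus wins. *)
Lemma psi''_diff_mul_nonneg (h A B : R) : A + B <= 0 ->
  0 <= (psi'' (h * A) - psi'' (h * B)) * (A - B).
Proof.
  intros Hsum. destruct (Rle_or_lt B A) as [HBA | HAB].
  - assert (psi'' (h * B) <= psi'' (h * A)).
    { apply psi''_abs_antitone, Rabs_scale_le.
      unfold Rabs; destruct (Rcase_abs A), (Rcase_abs B); lra. }
    nra.
  - assert (psi'' (h * A) <= psi'' (h * B)).
    { apply psi''_abs_antitone, Rabs_scale_le.
      unfold Rabs; destruct (Rcase_abs A), (Rcase_abs B); lra. }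
    nra.
Qed.

Lemma psi''_diff_mul_nonpos (h A B : R) : 0 <= A + B ->
  (psi'' (h * A) - psi'' (h * B)) * (A - B) <= 0.
Proof.
  intros Hsum. pose proof (psi''_diff_mul_nonneg h (- A) (- B) ltac:(lra)) as H.
  replace (h * - A) with (- (h * A)) in H by ring.
  replace (h * - B) with (- (h * B)) in H by ring.
  rewrite !psi''_even in H. lra.
Qed.

(* The case r = s: the derivative h^2 psi''(h(r+w)) increases left of -r
   and decreases right of it. *)
Lemma diag_convex_concave (m h r : R) :
  convex_concave_about (- r) (fun w => m + h * psi' (h * (r + w))).
Proof.
  set (f' := fun w => h * h * psi'' (h * (r + w))).
  assert (df : forall w, derivable_pt_lim (fun w => m + h * psi' (h * (r + w))) w (f' w)).
  { intros w. unfold f'. derive_closed_form. rewrite Derive_psi'. ring. }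
  assert (Hcmp : forall u v, Rabs (r + u) <= Rabs (r + v) -> f' v <= f' u).
  { intros u v Huv. unfold f'. apply Rmult_le_compat_l; [nra |].
    apply psi''_abs_antitone, Rabs_scale_le, Huv. }
  split.
  - apply (convex_of_monotone_deriv _ _ f' df); [intros u v z; lra |].
    intros u v Hu Hv Huv. apply Hcmp.
    unfold Rabs; destruct (Rcase_abs (r + u)), (Rcase_abs (r + v)); lra.
  - apply (concave_of_monotone_deriv _ _ f' df); [intros u v z; lra |].
    intros u v Hu Hv Huv. apply Hcmp.
    unfold Rabs; destruct (Rcase_abs (r + u)), (Rcase_abs (r + v)); lra.
Qed.

(* The case r <> s: the second derivative
   h^2 (psi''(h(s+w)) - psi''(h(r+w))) / (s - r) is >= 0 left of -(r+s)/2
   and <= 0 right of it. *)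
Lemma offdiag_convex_concave (m h r s : R) : r <> s ->
  convex_concave_about (- ((s + r) / 2))
    (fun w => m + (psi (h * (s + w)) - psi (h * (r + w))) / (s - r)).
Proof.
  intros Hrs.
  set (f' := fun w => h * (psi' (h * (s + w)) - psi' (h * (r + w))) / (s - r)).
  set (f'' := fun w => h * h * (psi'' (h * (s + w)) - psi'' (h * (r + w))) / (s - r)).
  assert (df : forall w, derivable_pt_lim
            (fun w => m + (psi (h * (s + w)) - psi (h * (r + w))) / (s - r)) w (f' w)).
  { intros w. unfold f'. derive_closed_form. rewrite !Derive_psi. field. lra. }
  assert (df' : forall w, derivable_pt_lim f' w (f'' w)).
  { intros w. unfold f', f''. derive_closed_form. rewrite !Derive_psi'. field. lra. }
  assert (Hf'' : forall w, f'' w =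
    h * h * ((psi'' (h * (s + w)) - psi'' (h * (r + w))) * ((s + w) - (r + w))) *
    / ((s - r) * (s - r))).
  { intros w. unfold f''. field. lra. }
  assert (Hsq : 0 < / ((s - r) * (s - r))).
  { apply Rinv_0_lt_compat. nra. }
  split.
  - apply (convex_of_monotone_deriv _ _ f' df); [intros u v z; lra |].
    intros u v Hu Hv Huv. apply (le_of_derivable_nonneg f' f''); auto.
    intros z Hz. rewrite Hf''.
    pose proof (psi''_diff_mul_nonneg h (s + z) (r + z) ltac:(lra)).
    apply Rmult_le_pos; [apply Rmult_le_pos; [nra | auto] | lra].
  - apply (concave_of_monotone_deriv _ _ f' df); [intros u v z; lra |].
    intros u v Hu Hv Huv. apply (le_of_deriv_nonpos f' f'' u v Huv).
    + intros z _. exact (continuity_of_derivable _ _ _ (df' z)).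
    + intros z _. apply df'.
    + intros z Hz. rewrite Hf''.
      pose proof (psi''_diff_mul_nonpos h (s + z) (r + z) ltac:(lra)).
      apply Rmult_le_0_r; [| lra]. apply Rmult_le_0_l; [nra | auto].
Qed.

(* With m = log_mid and h = log_half, ln x = m - h and ln y = m + h.
   log_mean_pow x y p = (y^p - x^p) / (p (ln y - ln x)) is the logarithmic
   mean of x^p and y^p, i.e. E(p,0;x,y)^p. *)
Definition log_mid (x y : R) : R := (ln x + ln y) / 2.
Definition log_half (x y : R) : R := (ln y - ln x) / 2.
Definition log_mean_pow (x y p : R) : R :=
  / p * ((Rpower y p - Rpower x p) / (ln y - ln x)).

Lemma ln_diff_neq0 (x y : R) : 0 < x -> 0 < y -> x <> y -> ln y - ln x <> 0.
Proof. intros hx hy hxy H. apply hxy, ln_inv; auto. lra. Qed.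

Lemma log_half_neq0 (x y : R) : 0 < x -> 0 < y -> x <> y -> log_half x y <> 0.
Proof. intros hx hy hxy. pose proof (ln_diff_neq0 x y hx hy hxy). unfold log_half. lra. Qed.

Lemma Rpower_pos (a b : R) : 0 < Rpower a b.
Proof. apply exp_pos. Qed.

Lemma Rpower_y_mid (x y p : R) :
  Rpower y p = exp (p * log_mid x y) * exp (log_half x y * p).
Proof. unfold Rpower. rewrite <- exp_plus. f_equal. unfold log_mid, log_half. field. Qed.

Lemma Rpower_x_mid (x y p : R) :
  Rpower x p = exp (p * log_mid x y) * exp (- (log_half x y * p)).
Proof. unfold Rpower. rewrite <- exp_plus. f_equal. unfold log_mid, log_half. field. Qed.

Lemma log_mean_pow_sinh (x y p : R) : 0 < x -> 0 < y -> x <> y -> p <> 0 ->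
  log_mean_pow x y p =
  exp (p * log_mid x y) * (sinh (log_half x y * p) / (log_half x y * p)).
Proof.
  intros hx hy hxy hp. pose proof (log_half_neq0 x y hx hy hxy).
  unfold log_mean_pow. rewrite (Rpower_y_mid x y p), (Rpower_x_mid x y p).
  replace (ln y - ln x) with (2 * log_half x y) by (unfold log_half; field).
  unfold sinh. field. auto.
Qed.

Lemma log_mean_pow_pos (x y p : R) : 0 < x -> 0 < y -> x <> y -> p <> 0 ->
  0 < log_mean_pow x y p.
Proof.
  intros hx hy hxy hp. rewrite log_mean_pow_sinh by auto.
  apply Rmult_lt_0_compat; [apply exp_pos |]. apply sinh_div_pos.
  apply Rmult_integral_contrapositive. split; auto using log_half_neq0.
Qed.

Lemma ln_log_mean_pow (x y p : R) : 0 < x -> 0 < y -> x <> y -> p <> 0 ->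
  ln (log_mean_pow x y p) = p * log_mid x y + psi (log_half x y * p).
Proof.
  intros hx hy hxy hp.
  assert (Hhp : log_half x y * p <> 0)
    by (apply Rmult_integral_contrapositive; split; auto using log_half_neq0).
  rewrite log_mean_pow_sinh, ln_mult, ln_exp, psi_ne0 by auto using exp_pos, sinh_div_pos.
  reflexivity.
Qed.

Lemma ln_E_offdiag (x y p q : R) : 0 < x -> 0 < y -> x <> y -> p <> q ->
  ln (E p q x y) =
  log_mid x y + (psi (log_half x y * q) - psi (log_half x y * p)) / (q - p).
Proof.
  intros hx hy hxy hpq. unfold E.
  destruct (Req_EM_T x y) as [| _]; [contradiction |].
  destruct (Req_EM_T p q) as [| _]; [contradiction |].
  destruct (Req_EM_T q 0) as [-> | Hq].
  - fold (log_mean_pow x y p).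
    rewrite ln_Rpower, ln_log_mean_pow, Rmult_0_r, psi_0 by auto. field. auto.
  - destruct (Req_EM_T p 0) as [-> | Hp].
    + fold (log_mean_pow x y q).
      rewrite ln_Rpower, ln_log_mean_pow, Rmult_0_r, psi_0 by auto. field. auto.
    + pose proof (log_mean_pow_pos x y p hx hy hxy Hp) as Kp.
      pose proof (log_mean_pow_pos x y q hx hy hxy Hq) as Kq.
      assert (Hdp : Rpower y p - Rpower x p <> 0).
      { intros Z. unfold log_mean_pow in Kp. rewrite Z in Kp.
        unfold Rdiv in Kp. rewrite Rmult_0_l, Rmult_0_r in Kp. lra. }
      replace (p / q * ((Rpower y q - Rpower x q) / (Rpower y p - Rpower x p)))
        with (log_mean_pow x y q * / log_mean_pow x y p)
        by (pose proof (ln_diff_neq0 x y hx hy hxy); unfold log_mean_pow; field; auto).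
      rewrite ln_Rpower, ln_mult, ln_Rinv, !ln_log_mean_pow
        by auto using Rinv_0_lt_compat.
      field. lra.
Qed.

Lemma ln_E_diag (x y p : R) : 0 < x -> 0 < y -> x <> y ->
  ln (E p p x y) = log_mid x y + log_half x y * psi' (log_half x y * p).
Proof.
  intros hx hy hxy. pose proof (log_half_neq0 x y hx hy hxy) as Hh. unfold E.
  destruct (Req_EM_T x y) as [| _]; [contradiction |].
  destruct (Req_EM_T p p) as [_ | ]; [| contradiction].
  destruct (Req_EM_T p 0) as [-> | Hp].
  - rewrite Rmult_0_r, psi'_0, <- Rpower_sqrt, ln_Rpower, ln_mult
      by auto using Rmult_lt_0_compat.
    unfold log_mid. field.
  - assert (Hhp : log_half x y * p <> 0) by (apply Rmult_integral_contrapositive; auto).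
    rewrite ln_mult, ln_exp, ln_Rpower by auto using exp_pos, Rpower_pos.
    unfold Rdiv at 1.
    rewrite ln_mult, ln_Rinv, !ln_Rpower by auto using Rinv_0_lt_compat, Rpower_pos.
    rewrite psi'_ne0 by auto.
    replace (ln x) with (log_mid x y - log_half x y) by (unfold log_mid, log_half; field).
    replace (ln y) with (log_mid x y + log_half x y) by (unfold log_mid, log_half; field).
    rewrite (Rpower_y_mid x y p), (Rpower_x_mid x y p).
    pose proof (sinh_neq0 _ Hhp) as Hs. unfold cosh, sinh in *.
    assert (Hd : exp (log_half x y * p) - exp (- (log_half x y * p)) <> 0) by lra.
    field. repeat split; auto.
    rewrite <- Rmult_minus_distr_l. apply Rmult_integral_contrapositive.
    split; [apply exp_neq_0 | lra].
Qed.

Theorem theorem3 (x y r s : R) (hx : 0 < x) (hy : 0 < y) :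
  convex_on (fun w => w < - ((s + r) / 2)) (fun w => ln (F r s x y w)) /\
  concave_on (fun w => - ((s + r) / 2) < w) (fun w => ln (F r s x y w)).
Proof.
  change (convex_concave_about (- ((s + r) / 2)) (fun w => ln (F r s x y w))).
  destruct (Req_dec x y) as [<- | Hxy].
  - assert (Hconst : forall w, ln (F r s x x w) = ln x).
    { intros w. unfold F, E. destruct (Req_EM_T x x); [reflexivity | contradiction]. }
    split; intros a b t _ _ _; rewrite !Hconst; lra.
  - set (m := log_mid x y). set (h := log_half x y).
    destruct (Req_dec r s) as [<- | Hrs].
    + replace (- ((r + r) / 2)) with (- r) by field.
      apply (convex_concave_about_ext _ (fun w => m + h * psi' (h * (r + w)))).
      * intros w. unfold F. rewrite ln_E_diag; auto.
      * apply diag_convex_concave.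
    + apply (convex_concave_about_ext _
               (fun w => m + (psi (h * (s + w)) - psi (h * (r + w))) / (s - r))).
      * intros w. unfold F. rewrite ln_E_offdiag by (auto; lra).
        replace (s + w - (r + w)) with (s - r) by ring. reflexivity.
      * apply offdiag_convex_concave, Hrs.
Qed.
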